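(* Let $n$ be a positive integer and $t\ge 3$. Then $\tilde{R}(\dot C^{(rbr)}_{t},Q_n)\le (t-1)n$.
   Context: $\dot C_t^{(rbr)}$ denotes the chain on $t$ vertices colored alternately red and blue, with red minimal vertex. $Q_N$ is the Boolean lattice of all subsets of an $N$-element set ordered by inclusion. In a blue/red coloring of $Q_N$, a copy of a colored poset $\dot P$ is an induced subposet isomorphic to $P$ with matching colors. The poset Erdős–Hajnal number $\tilde{R}(\dot P,Q_n)$ is the minimum $N$ such that every blue/red coloring of $Q_N$ contains a copy of $\dot P$ or a monochromatic induced copy of $Q_n$. *)

From mathcomp Require Import all_boot.
Set Implicit Arguments. Unset Strict Implicit. Unset Printing Implicit Defensive.

(* The Boolean lattice Q_N is {set 'I_N} ordered by \subset.
   A blue/red coloring of Q_N is a map {set 'I_N} -> bool; [true] = red,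
   [false] = blue. *)
Definition coloring (N : nat) := {set 'I_N} -> bool.

(* A copy of the alternating chain C_t^(rbr): t elements
   ch 0 \proper ch 1 \proper ... \proper ch (t-1) (an induced chain of size t)
   with ch i red iff i is even (the minimal element ch 0 is red). *)
Definition has_rbr_chain (N t : nat) (c : coloring N) : Prop :=
  exists ch : 'I_t -> {set 'I_N},
    (forall i j : 'I_t, i < j -> ch i \proper ch j) /\
    (forall i : 'I_t, c (ch i) = ~~ odd i).

Definition has_mono_Qn (N n : nat) (c : coloring N) : Prop :=
  exists (f : {set 'I_n} -> {set 'I_N}) (col : bool),
    (forall X Y : {set 'I_n}, (f X \subset f Y) = (X \subset Y)) /\
    (forall X : {set 'I_n}, c (f X) = col).

Definition EH_property (t n N : nat) : Prop :=
  forall c : coloring N, has_rbr_chain t c \/ has_mono_Qn n c.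

(* The poset Erdos-Hajnal number is the least N with EH_property t n N;
   "R~ <= M" means some N <= M has the property. *)
Definition EH_number_le (t n M : nat) : Prop :=
  exists2 N, N <= M & EH_property t n N.

From mathcomp Require Import all_boot zify.
From Stdlib Require Import Classical.
Set Implicit Arguments. Unset Strict Implicit. Unset Printing Implicit Defensive.

(* Split the ground set into t - 1 blocks B_0, ..., B_{t-2} of size n and let
   L_j be the union of the first j blocks.  If no copy of Q_n is monochromatic,
   then for j < t - 3 the cube {L_j ∪ Y | Y ⊆ B_j} contains a set of the color
   required at position j, and these sets form the bottom of the chain.  The
   top three elements use only the two remaining blocks: with C the complement
   of L_{t-2}, map Y ⊆ B_{t-3} to L_{t-3} ∪ Y, with C added exactly when some
   set between L_{t-3} and L_{t-3} ∪ Y has the wanted color b.  This condition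
   is monotone in Y, so the map is still a copy of Q_n and takes color b at
   some Y.  Then C was added, so some x between L_{t-3} and L_{t-3} ∪ Y has
   color b, and the cube {L_{t-3} ∪ Y ∪ W | W ⊆ B_{t-2}}, which lies between x
   and L_{t-3} ∪ Y ∪ C, supplies a set of color ~~ b. *)

Section OrderEmbeddings.
Variables (T : finType) (n : nat).

Definition order_embedding (f : {set 'I_n} -> {set T}) : Prop :=
  forall X Y : {set 'I_n}, (f X \subset f Y) = (X \subset Y).

Variables (e : 'I_n -> T) (D : {set T}).
Hypotheses (e_inj : injective e) (e_notin_D : forall i, e i \notin D).

Lemma order_embedding_cube_ext (C : {set T}) (p : pred {set 'I_n}) :
  (forall i, e i \notin C) ->
  (forall X Y : {set 'I_n}, X \subset Y -> p X -> p Y) ->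
  order_embedding (fun Y => D :|: e @: Y :|: (if p Y then C else set0)).
Proof.
move=> e_notin_C p_mono X Y; apply/idP/idP => [sub_fXY|XY].
  apply/subsetP => i iX.
  have : e i \in D :|: e @: X :|: (if p X then C else set0).
    by rewrite !in_setU imset_f ?orbT.
  move/(subsetP sub_fXY); rewrite !in_setU (negbTE (e_notin_D i)) mem_imset //.
  by case: (p Y); rewrite ?in_set0 ?(negbTE (e_notin_C i)) ?orbF.
rewrite setUSS ?setUS ?imsetS //.
by case pX: (p X); rewrite ?sub0set // (p_mono _ _ XY pX).
Qed.

Lemma order_embedding_cube : order_embedding (fun Y => D :|: e @: Y).
Proof.
move=> X Y; have e_notin_0 i : e i \notin set0 by rewrite in_set0.
have := order_embedding_cube_ext (p := pred0) e_notin_0 (fun _ _ _ => id) X Y.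
by rewrite !setU0.
Qed.

End OrderEmbeddings.

Section AlternatingChains.
Variables (T : finType) (c : {set T} -> bool).

Definition alternating_chain_below (l : nat) (D : {set T}) : Prop :=
  exists g : nat -> {set T},
    [/\ forall i, i.+1 < l -> g i \subset g i.+1,
        forall i, i < l -> c (g i) = ~~ odd i
      & forall i, i < l -> g i \subset D].

Lemma alternating_chain_below0 (D : {set T}) : alternating_chain_below 0 D.
Proof. by exists (fun=> D). Qed.

Lemma alternating_chain_below_sub l (D D' : {set T}) :
  D \subset D' -> alternating_chain_below l D -> alternating_chain_below l D'.
Proof.
move=> DD' [g [g_mono g_col g_sub]]; exists g; split=> // i il.
exact: subset_trans (g_sub i il) DD'.
Qed.

Lemma alternating_chain_below_extend l (D x : {set T}) :
  alternating_chain_below l D -> D \subset x -> c x = ~~ odd l ->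
  alternating_chain_below l.+1 x.
Proof.
move=> [g [g_mono g_col g_sub]] Dx cx.
exists (fun i => if i < l then g i else x); split=> i.
- rewrite ltnS => il; rewrite il; case: ifP => [Sil|_]; first exact: g_mono Sil.
  exact: subset_trans (g_sub i il) Dx.
- by rewrite ltnS leq_eqVlt => /predU1P[->|il]; rewrite ?ltnn ?il ?g_col.
- rewrite ltnS leq_eqVlt => /predU1P[->|il]; rewrite ?ltnn ?il //.
  exact: subset_trans (g_sub i il) Dx.
Qed.

End AlternatingChains.

Lemma rbr_chain_of_alternating N t (c : coloring N) (D : {set 'I_N}) :
  alternating_chain_below c t D -> has_rbr_chain t c.
Proof.
move=> [g [g_mono g_col _]].
have g_proper : {in [pred i | i < t] &, {homo g : i j / i < j >-> i \proper j}}.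
  apply: homo_ltn_in => [y x z|i j _ /[!inE] jt k /andP[_ kj]|i /[!inE] it Sit].
  - exact: proper_trans.
  - by rewrite inE (ltn_trans kj jt).
  rewrite properEneq g_mono // andbT; apply: contraTneq isT => gSi.
  by have := g_col i it; rewrite gSi g_col //=; case: (odd i).
exists (fun i : 'I_t => g i); split=> [i j ij|i]; last exact: g_col.
by apply: g_proper; rewrite ?inE.
Qed.

Section Blocks.
Variables (T : finType) (m n : nat) (e : 'I_m.+2 * 'I_n -> T).
Hypothesis e_inj : injective e.

Definition block (j : nat) (i : 'I_n) : T := e (inord j, i).

Definition lower (j : nat) : {set T} := [set e q | q : 'I_m.+2 * 'I_n & q.1 < j].

Lemma block_inj j : injective (block j).
Proof. by move=> i i' /e_inj[]. Qed.

Lemma block_in_lower j b i : j < m.+2 -> (block j i \in lower b) = (j < b).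
Proof. by move=> jm; rewrite /block /lower mem_imset // inE /= inordK. Qed.

Lemma lower_block_sub j (Y : {set 'I_n}) :
  j < m.+2 -> lower j :|: block j @: Y \subset lower j.+1.
Proof.
move=> jm; apply/subsetP => _ /setUP[/imsetP[q /[!inE] qj ->]|/imsetP[i _ ->]].
  by rewrite imset_f // inE ltnW.
by rewrite block_in_lower.
Qed.

End Blocks.

Section NoMonochromaticCube.
Variables (T : finType) (c : {set T} -> bool) (n : nat).
Hypothesis cube_bichromatic : forall f : {set 'I_n} -> {set T},
  order_embedding f -> forall b, exists X, c (f X) = b.

Lemma cube_color (e : 'I_n -> T) (D : {set T}) (b : bool) :
  injective e -> (forall i, e i \notin D) ->
  exists Y : {set 'I_n}, c (D :|: e @: Y) = b.
Proof. by move=> e_inj e_notin_D; apply/cube_bichromatic/order_embedding_cube. Qed.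

Lemma alternating_triple_above (e1 e2 : 'I_n -> T) (D : {set T}) (b : bool) :
  injective e1 -> injective e2 ->
  (forall i, e1 i \notin D) -> (forall i, e2 i \notin D :|: e1 @: setT) ->
  exists x y z : {set T}, [/\ D \subset x, x \subset y, y \subset z
                  & [/\ c x = b, c y = ~~ b & c z = b]].
Proof.
move=> e1_inj e2_inj e1_notin_D e2_notin_De1.
pose C := ~: (D :|: e1 @: setT).
pose p (Y : {set 'I_n}) :=
  [exists x : {set T}, [&& D \subset x, x \subset D :|: e1 @: Y & c x == b]].
have p_mono (X Y : {set 'I_n}) : X \subset Y -> p X -> p Y.
  move=> XY /existsP[x /and3P[Dx xX cx]]; apply/existsP; exists x.
  by rewrite Dx cx (subset_trans xX) ?setUS ?imsetS.
have e1_notin_C i : e1 i \notin C by rewrite inE negbK !inE imset_f ?orbT.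
have [Y cY] := cube_bichromatic
  (order_embedding_cube_ext e1_inj e1_notin_D e1_notin_C p_mono) b.
have pY : p Y.
  apply: contraT => npY; move: cY; rewrite (negbTE npY) setU0 => cY.
  case/negP: npY; apply/existsP; exists (D :|: e1 @: Y).
  by rewrite subxx subsetUl cY eqxx.
rewrite pY in cY; case/existsP: pY => x /and3P[Dx xY /eqP cx].
have e2_notin_De1Y i : e2 i \notin D :|: e1 @: Y.
  by apply: contra (e2_notin_De1 i); apply/subsetP; rewrite setUS ?imsetS.
have [W cW] := cube_color (~~ b) e2_inj e2_notin_De1Y.
exists x, (D :|: e1 @: Y :|: e2 @: W), (D :|: e1 @: Y :|: C); split=> //.
- exact: subset_trans xY (subsetUl _ _).
- by rewrite setUS //; apply/subsetP => _ /imsetP[i _ ->]; rewrite inE.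
Qed.

Variables (m : nat) (e : 'I_m.+2 * 'I_n -> T).
Hypothesis e_inj : injective e.

Lemma alternating_chain_below_lower j :
  j <= m.+2 -> alternating_chain_below c j (lower e j).
Proof.
elim: j => [|j IHj] jm; first exact: alternating_chain_below0.
have block_notin_lower i : block e j i \notin lower e j.
  by rewrite (block_in_lower e_inj) ?ltnn.
have [Y cY] := cube_color (~~ odd j) (block_inj e_inj (j := j)) block_notin_lower.
apply: alternating_chain_below_sub (lower_block_sub e_inj Y jm) _.
exact: alternating_chain_below_extend (IHj (ltnW jm)) (subsetUl _ _) cY.
Qed.

Lemma alternating_chain_of_blocks : alternating_chain_below c m.+3 setT.
Proof.
have block_notin_lower i : block e m i \notin lower e m.
  by rewrite (block_in_lower e_inj) ?ltnn.
have block_succ_notin i : block e m.+1 i \notin lower e m :|: block e m @: setT.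
  apply: contra (_ : block e m.+1 i \notin lower e m.+1); last first.
    by rewrite (block_in_lower e_inj) ?ltnn.
  exact/subsetP/lower_block_sub.
have [x [y [z [Dx xy yz [cx cy cz]]]]] := alternating_triple_above (~~ odd m)
  (block_inj e_inj (j := m)) (block_inj e_inj (j := m.+1))
  block_notin_lower block_succ_notin.
apply: alternating_chain_below_sub (subsetT z) _.
apply: alternating_chain_below_extend yz _; last by rewrite cz /= negbK.
apply: alternating_chain_below_extend xy _; last by rewrite cy.
exact: alternating_chain_below_extend
  (alternating_chain_below_lower (leqW (leqnSn m))) Dx cx.
Qed.

End NoMonochromaticCube.

Lemma bichromatic_of_no_mono_Qn N n (c : coloring N) :
  ~ has_mono_Qn n c -> forall f : {set 'I_n} -> {set 'I_N},
  order_embedding f -> forall b, exists X, c (f X) = b.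
Proof.
move=> no_mono f f_emb b.
case: (pickP [pred X | c (f X) == b]) => [X /eqP|no_b]; first by exists X.
case: no_mono; exists f, (~~ b); split=> // X.
by move: (no_b X) => /=; case: (c (f X)); case: (b) => /=.
Qed.

Lemma injection_of_card (A B : finType) :
  #|A| <= #|B| -> exists f : A -> B, injective f.
Proof.
move=> AB; exists (fun a => enum_val (widen_ord AB (enum_rank a))).
by move=> a a' /enum_val_inj /(congr1 val) eq_ranks; apply/enum_rank_inj/val_inj.
Qed.

(* For n = 0 a single set is already a monochromatic copy of Q_0. *)
Theorem lemma16 (n t : nat) : 0 < n -> 3 <= t -> EH_number_le t n ((t - 1) * n).
Proof.
move=> _ t_ge3; have [m ->] : exists m, t = m.+3 by exists (t - 3); lia.
rewrite subn1 /=; exists (m.+2 * n) => // c.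
case: (classic (has_mono_Qn n c)) => [mono|no_mono]; [by right|left].
have [e e_inj] : exists e : 'I_m.+2 * 'I_n -> 'I_(m.+2 * n), injective e.
  by apply: injection_of_card; rewrite card_prod !card_ord.
exact: rbr_chain_of_alternating
  (alternating_chain_of_blocks (bichromatic_of_no_mono_Qn no_mono) e_inj).
Qed.
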